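(* Consider an instance of UBM2SP with harmonious order $\mathcal{L}$, and let $\{\pi_1,\pi_2\}$ be a solution in which both manipulators place $p$ in their highest position. Let $c\in\mathcal{C}$ with $\pi_1(c)=x$ and $\pi_2(c)=y$. Suppose there are integers $x',y'$ such that (1) $x'>x$ and $y'>y$; (2) $SC_{\mathcal{V}}(c)+x'+y'-2<SC_{\mathcal{V}}(p)+2|\mathcal{C}|$; (3) $\mathcal{C}_{\pi_1}(x+1,x')\subseteq\mathcal{C}(\mathcal{L},-c)$ and $\mathcal{C}_{\pi_2}(y+1,y')\subseteq\mathcal{C}(\mathcal{L},-c)$. Define $\pi_1'$ by $\pi_1'(c')=\pi_1(c')$ if $\pi_1(c')>x'$ or $\pi_1(c')<x$; $\pi_1'(c)=x'$; and $\pi_1'(c')=j$ if $x<\pi_1(c')=j+1\le x'$. Define $\pi_2'$ analogously: $\pi_2'(c')=\pi_2(c')$ if $\pi_2(c')>y'$ or $\pi_2(c')<y$; $\pi_2'(c)=y'$; and $\pi_2'(c')=j$ if $y<\pi_2(c')=j+1\le y'$. Then $\{\pi_1',\pi_2'\}$ is also a solution.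
   Context: Borda elections: candidates $\mathcal{C}\cup\{p\}$ ($p\notin\mathcal{C}$); each vote is a bijection $\pi:\mathcal{C}\cup\{p\}\to\{1,\dots,|\mathcal{C}|+1\}$, giving candidate $c$ score $\pi(c)-1$; $SC_{\mathcal{V}}(c)$ denotes the total score of $c$ from the non-manipulator votes $\Pi_{\mathcal{V}}$. $p$ wins iff its total score is strictly higher than that of every other candidate. A vote $\pi$ is coincident with a bijection $\mathcal{L}:\mathcal{C}\cup\{p\}\to\{1,\dots,|\mathcal{C}|+1\}$ if for any three distinct candidates $a,b,c$ with $\mathcal{L}(a)<\mathcal{L}(b)<\mathcal{L}(c)$ or $\mathcal{L}(c)<\mathcal{L}(b)<\mathcal{L}(a)$, $\pi(c)>\pi(b)$ implies $\pi(b)>\pi(a)$. UBM2SP: given candidates $\mathcal{C}\cup\{p\}$, votes $\Pi_{\mathcal{V}}$ all coincident with a given bijection $\mathcal{L}$ (harmonious order), with $p$ not the winner, and two manipulators; a solution is a pair of votes $\{\pi_1,\pi_2\}$, both coincident with $\mathcal{L}$, such that $p$ has strictly higher total score than every candidate of $\mathcal{C}$ with respect to $\Pi_{\mathcal{V}}\uplus\{\pi_1,\pi_2\}$. Notation: $\mathcal{C}_L=\{c\in\mathcal{C}:\mathcal{L}(c)<\mathcal{L}(p)\}$, $\mathcal{C}_R=\{c\in\mathcal{C}:\mathcal{L}(c)>\mathcal{L}(p)\}$; for $c\in\mathcal{C}$, $\mathcal{C}(\mathcal{L},-c)=\mathcal{C}_L$ if $c\in\mathcal{C}_R$ and $=\mathcal{C}_R$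 if $c\in\mathcal{C}_L$. For a vote $\pi$ and integers $x\le x'$, $\mathcal{C}_\pi(x,x')=\{c\in\mathcal{C}\cup\{p\}: x\le\pi(c)\le x'\}$. *)

From mathcomp Require Import all_boot.
Set Implicit Arguments. Unset Strict Implicit. Unset Printing Implicit Defensive.

Section Borda.
Variable T : finType. (* the candidate set C ∪ {p}; #|T| = |C| + 1 *)

(* A vote: a bijection T -> {1, ..., #|T|} (injective into that range, hence bijective). *)
Definition is_vote (pi : T -> nat) : Prop :=
  injective pi /\ (forall d, 1 <= pi d <= #|T|).

Definition coincident (pi L : T -> nat) : Prop :=
  forall a b d : T, a != b -> b != d -> a != d ->
    (L a < L b < L d) || (L d < L b < L a) ->
    pi d > pi b -> pi b > pi a.

(* Borda score of d from the non-manipulator votes V (a multiset of n votes) *)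
Definition score (n : nat) (V : 'I_n -> T -> nat) (d : T) : nat :=
  \sum_(i < n) (V i d - 1).

Definition total_score n (V : 'I_n -> T -> nat) (pi1 pi2 : T -> nat) (d : T) : nat :=
  score V d + (pi1 d - 1) + (pi2 d - 1).

Definition p_wins_V n (V : 'I_n -> T -> nat) (p : T) : Prop :=
  forall d, d != p -> score V d < score V p.

Definition is_solution (L : T -> nat) (p : T) n (V : 'I_n -> T -> nat)
    (pi1 pi2 : T -> nat) : Prop :=
  [/\ is_vote pi1, coincident pi1 L, is_vote pi2, coincident pi2 L &
      forall d, d != p -> total_score V pi1 pi2 d < total_score V pi1 pi2 p].

Definition C_L_minus (L : T -> nat) (p c d : T) : bool :=
  if L p < L c then L d < L p else L p < L d.

Definition C_pi (pi : T -> nat) (lo hi : nat) (d : T) : bool := lo <= pi d <= hi.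

Definition shift_vote (pi : T -> nat) (c : T) (x x' : nat) (d : T) : nat :=
  if d == c then x' else if x < pi d <= x' then (pi d).-1 else pi d.

End Borda.

(* Moving c up from position x to x' only shifts the candidates in between down by
   one, so every score other than c's weakly decreases, p stays on top (p is not in
   C(L,-c), hence sits above x'), and condition (2) is exactly the bound needed for
   c.  A vote is coincident with L iff it has no "valley": no b strictly between a
   and d in L ranked below both.  A valley of the new vote is a valley of the old
   one, except when it involves c and a candidate b that jumped over c; such a b
   lies on the far side of p from c, so b would be a valley between p and the
   third candidate in the old vote. *)
Set Warnings "-notation-overridden".
From mathcomp Require Import all_boot zify.
Set Implicit Arguments. Unset Strict Implicit. Unset Printing Implicit Defensive.

Section Valleys.
Variable T : finType.

Definition between (L : T -> nat) (a b d : T) : bool :=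
  (L a < L b < L d) || (L d < L b < L a).

Lemma between_sym L a b d : between L a b d = between L d b a.
Proof. by rewrite /between orbC. Qed.

Definition valley_free (pi L : T -> nat) : Prop :=
  forall a b d, a != b -> b != d -> a != d -> between L a b d ->
    pi b < pi a -> pi b < pi d -> False.

Lemma coincident_valley_free pi L : coincident pi L -> valley_free pi L.
Proof.
move=> coinc a b d ab bd ad bet ba bd'.
by have := coinc a b d ab bd ad bet bd'; rewrite ltnNge ltnW.
Qed.

Lemma valley_free_coincident pi L :
  injective pi -> valley_free pi L -> coincident pi L.
Proof.
move=> pi_inj vfree a b d ab bd ad bet bd'; rewrite ltnNge leq_eqVlt negb_or.
apply/andP; split; last by apply/negP => ba; apply: (vfree a b d).
by apply/eqP => /pi_inj ba; rewrite ba eqxx in ab.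
Qed.

End Valleys.

Section ShiftVoteOrder.
Variables (T : finType) (pi : T -> nat) (c : T) (x' : nat).

Local Notation sv := (shift_vote pi c (pi c) x').

Lemma shift_vote_c : sv c = x'.
Proof. by rewrite /shift_vote eqxx. Qed.

Lemma shift_vote_neq d : d != c ->
  sv d = if pi c < pi d <= x' then (pi d).-1 else pi d.
Proof. by move=> dc; rewrite /shift_vote (negbTE dc). Qed.

Lemma shift_vote_le d : d != c -> sv d <= pi d.
Proof. by move=> dc; rewrite shift_vote_neq //; case: ifP; lia. Qed.

Lemma shift_vote_ltW e f : e != c -> f != c -> sv e < sv f -> pi e < pi f.
Proof. by move=> ec fc; rewrite !shift_vote_neq //; do 2 case: ifP; lia. Qed.

Hypothesis lt_c_x' : pi c < x'.

Lemma shift_vote_c_lt e : e != c -> sv c < sv e -> pi c < pi e.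
Proof. by move=> ec; rewrite shift_vote_c shift_vote_neq //; case: ifP; lia. Qed.

Hypothesis pi_inj : injective pi.

Let pi_neq d e : d != e -> pi d != pi e.
Proof. by apply: contraNneq => /pi_inj ->. Qed.

Lemma shift_vote_lt_c e : e != c -> sv e < sv c ->
  pi e < pi c \/ C_pi pi (pi c).+1 x' e.
Proof.
move=> ec; have := pi_neq ec; rewrite shift_vote_c shift_vote_neq // /C_pi.
by case: ifP => [/andP[? ?] _|/negbT]; [right | left]; lia.
Qed.

Lemma shift_vote_inj : injective sv.
Proof.
move=> d e; case: (eqVneq d c) => [->|dc]; case: (eqVneq e c) => [->|ec] //.
- by rewrite shift_vote_c shift_vote_neq //; have := pi_neq ec; case: ifP; lia.
- by rewrite shift_vote_c shift_vote_neq //; have := pi_neq dc; case: ifP; lia.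
rewrite !shift_vote_neq //; have := pi_neq dc; have := pi_neq ec.
by do 2 case: ifP; move=> ? ? ? ? E; apply: pi_inj; lia.
Qed.

End ShiftVoteOrder.

Section ShiftVote.
Variables (T : finType) (L pi : T -> nat) (p c : T) (x' : nat).
Hypotheses (pi_vote : is_vote pi) (pi_coinc : coincident pi L)
  (pi_top : pi p = #|T|) (c_ne_p : c != p) (lt_c_x' : pi c < x')
  (shifted_opposite : forall d, C_pi pi (pi c).+1 x' d -> C_L_minus L p c d).

Local Notation sv := (shift_vote pi c (pi c) x').

Let pi_inj : injective pi. Proof. by case: pi_vote. Qed.
Let pi_range d : 1 <= pi d <= #|T|. Proof. by case: pi_vote. Qed.

Let pi_neq d e : d != e -> pi d != pi e.
Proof. by apply: contraNneq => /pi_inj ->. Qed.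

Lemma p_notin_C_L_minus : ~~ C_L_minus L p c p.
Proof. by rewrite /C_L_minus ltnn; case: ifP. Qed.

Lemma shift_target_lt_top : x' < #|T|.
Proof.
rewrite ltnNge; apply/negP => le_top.
have := pi_neq c_ne_p; rewrite pi_top => pc_ne.
have p_shifted : C_pi pi (pi c).+1 x' p.
  by rewrite /C_pi pi_top; have := pi_range c; lia.
by have := shifted_opposite p_shifted; rewrite (negbTE p_notin_C_L_minus).
Qed.

Lemma shift_vote_p : sv p = #|T|.
Proof.
rewrite shift_vote_neq 1?eq_sym // pi_top.
by have := shift_target_lt_top; case: ifP; lia.
Qed.

Lemma shift_vote_is_vote : is_vote sv.
Proof.
split=> [|d]; first exact: (shift_vote_inj lt_c_x' pi_inj).
have := shift_target_lt_top; have := pi_range c.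
case: (eqVneq d c) => [->|dc]; first by rewrite shift_vote_c; lia.
by rewrite shift_vote_neq //; have := pi_range d; case: ifP; lia.
Qed.

Lemma no_valley_of_jumped b d : C_L_minus L p c b -> between L c b d ->
  pi b < pi d -> False.
Proof.
rewrite /C_L_minus /between => b_far bet bd.
have bp : b != p by apply: contraTneq b_far => ->; rewrite ltnn; case: ifP.
have bet' : between L d b p by rewrite /between; case: ifP b_far; lia.
have dp : d != p by apply: contraTneq bet' => ->; rewrite /between; lia.
have bd_neq : b != d by apply: contraTneq bd => ->; rewrite ltnn.
apply: (coincident_valley_free pi_coinc _ bp dp bet' bd); first by rewrite eq_sym.
by have := pi_neq bp; have := pi_range b; rewrite pi_top; lia.
Qed.

Lemma shift_vote_valley_free : valley_free sv L.
Proof.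
have vfree := coincident_valley_free pi_coinc.
move=> a b d ab bd ad bet ba bd'.
case: (eqVneq b c) => [bc|bc].
  subst b; apply: (vfree a c d) => //;
    by apply: (shift_vote_c_lt lt_c_x'); rewrite // eq_sym.
wlog dc : a d ab bd ad bet ba bd' / d != c.
  move=> wlog_dc; case: (eqVneq d c) => [dc|dc]; last exact: (wlog_dc a d).
  apply: (wlog_dc d a) => //; try by rewrite eq_sym.
  - by rewrite between_sym.
  - by rewrite -dc.
have pbd := shift_vote_ltW bc dc bd'.
case: (eqVneq a c) => [ac|ac]; last first.
  exact: (vfree a b d) (shift_vote_ltW bc ac ba) pbd.
subst a.
case: (shift_vote_lt_c lt_c_x' pi_inj bc ba) => [pbc|/shifted_opposite b_far].
- exact: (vfree c b d).
- exact: (no_valley_of_jumped b_far bet pbd).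
Qed.

Lemma shift_vote_coincident : coincident sv L.
Proof.
exact: valley_free_coincident (shift_vote_inj lt_c_x' pi_inj) shift_vote_valley_free.
Qed.

End ShiftVote.

Theorem mainTheorem7 (T : finType) (p : T) (L : T -> nat) (n : nat)
    (V : 'I_n -> T -> nat) (pi1 pi2 : T -> nat) (c : T) (x y x' y' : nat) :
  is_vote L ->
  (forall i, is_vote (V i) /\ coincident (V i) L) ->
  ~ p_wins_V V p ->
  is_solution L p V pi1 pi2 ->
  pi1 p = #|T| -> pi2 p = #|T| ->
  c != p -> pi1 c = x -> pi2 c = y ->
  x < x' -> y < y' ->
  score V c + x' + y' - 2 < score V p + 2 * (#|T| - 1) ->
  (forall d, C_pi pi1 x.+1 x' d -> C_L_minus L p c d) ->
  (forall d, C_pi pi2 y.+1 y' d -> C_L_minus L p c d) ->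
  is_solution L p V (shift_vote pi1 c x x') (shift_vote pi2 c y y').
Proof.
move=> _ _ _ [v1 coinc1 v2 coinc2 wins] top1 top2 cp <- <- xx' yy' cond2 far1 far2.
split.
- exact: shift_vote_is_vote v1 top1 cp xx' far1.
- exact: shift_vote_coincident v1 coinc1 top1 cp xx' far1.
- exact: shift_vote_is_vote v2 top2 cp yy' far2.
- exact: shift_vote_coincident v2 coinc2 top2 cp yy' far2.
move=> d dp; rewrite /total_score !(shift_vote_p v1 top1 cp xx' far1)
  !(shift_vote_p v2 top2 cp yy' far2).
case: (eqVneq d c) => [->|dc]; first by rewrite !shift_vote_c; lia.
have := wins d dp; rewrite /total_score top1 top2.
by have := shift_vote_le pi1 x' dc; have := shift_vote_le pi2 y' dc; lia.
Qed.
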